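(* Let $D$ be a regular $(v,k,\lambda,\mu)$-PDS in a finite group $G$ with $0<\mu<k$ and $\sqrt\Delta\in\mathbb{Z}$. If $p$ is a prime and $p^\ell$ divides both $\theta_1$ and $\theta_2$, then $k\equiv0\pmod{p^\ell}$. In particular $k\equiv0\pmod{\gcd(\theta_1,\theta_2)}$.
   Context: A $(v,k,\lambda,\mu)$-PDS in a group $G$ of order $v$ is a $k$-subset $D$ such that every nonidentity element of $D$ is $xy^{-1}$ ($x,y\in D$) in exactly $\lambda$ ways and every nonidentity element of $G\setminus D$ in exactly $\mu$ ways; regular means $D=D^{(-1)}$ and $1\notin D$. $\Delta=(\lambda-\mu)^2+4(k-\mu)$, $\theta_{1,2}=\frac12(\lambda-\mu\pm\sqrt\Delta)$. *)

From HB Require Import structures.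
From mathcomp Require Import all_boot all_order all_algebra all_fingroup.
Set Implicit Arguments. Unset Strict Implicit. Unset Printing Implicit Defensive.
Import Order.TTheory GRing.Theory Num.Theory.

Local Open Scope group_scope.

Definition nreps (gT : finGroupType) (D : {set gT}) (g : gT) : nat :=
  #|[set xy in setX D D | xy.1 * xy.2^-1 == g]|.

Definition is_PDS (gT : finGroupType) (G : {group gT}) (D : {set gT})
  (v k lam mu : nat) : Prop :=
  [/\ D \subset G, #|G| = v, #|D| = k,
      (forall g, g \in D -> g != 1 -> nreps D g = lam) &
      (forall g, g \in G :\: D -> g != 1 -> nreps D g = mu)].

Definition is_regular_PDS (gT : finGroupType) (G : {group gT}) (D : {set gT})
  (v k lam mu : nat) : Prop :=
  [/\ is_PDS G D v k lam mu, D^-1 = D & 1 \notin D].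

Local Open Scope ring_scope.

Definition PDS_Delta (k lam mu : nat) : int :=
  (lam%:Z - mu%:Z) ^+ 2 + 4 * (k%:Z - mu%:Z).

(* theta_{1,2} = (lambda - mu +/- s)/2 where s = sqrt Delta (a nonnegative
   integer).  When s^2 = Delta, lambda - mu +/- s is even, so the division is exact. *)
Definition PDS_theta1 (lam mu s : nat) : int := ((lam%:Z - mu%:Z + s%:Z) %/ 2)%Z.
Definition PDS_theta2 (lam mu s : nat) : int := ((lam%:Z - mu%:Z - s%:Z) %/ 2)%Z.

From HB Require Import structures.
From mathcomp Require Import all_boot all_order all_algebra all_fingroup.
From mathcomp Require Import zify ring.
Import Order.TTheory GRing.Theory Num.Theory.
Local Open Scope ring_scope.
Set Implicit Arguments. Unset Strict Implicit. Unset Printing Implicit Defensive.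

(* Let M be the 0/1 matrix of D indexed by G and J the all-one matrix.  The PDS
   axioms say MJ = JM = kJ and M^2 = (theta1 + theta2) M - theta1 theta2 I + mu J.
   Suitable combinations of M, I and J are the idempotents projecting onto the
   theta1- and theta2-eigenspaces away from the all-one vector; the trace of an
   idempotent is its rank, and tr M = 0 because 1 is not in D, so the trace
   computation yields k + theta1 r1 + theta2 r2 = 0 for some multiplicities r1, r2.
   Hence every common divisor of theta1 and theta2 divides k. *)

Lemma dvdz2_add_sqrt (a s c : int) : s ^+ 2 = a ^+ 2 + 4 * c -> (2 %| a + s)%Z.
Proof.
move=> hs; have : (2 %| (a + s) ^+ 2)%Z.
  apply/dvdzP; exists (a ^+ 2 + a * s + 2 * c); rewrite sqrrD hs; ring.
by rewrite !dvdzE abszX Euclid_dvdX // => /andP[].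
Qed.

Lemma PDS_theta_vieta k lam mu s :
  s%:Z ^+ 2 = PDS_Delta k lam mu ->
  [/\ PDS_theta1 lam mu s + PDS_theta2 lam mu s = lam%:Z - mu%:Z,
      PDS_theta1 lam mu s - PDS_theta2 lam mu s = s%:Z &
      PDS_theta1 lam mu s * PDS_theta2 lam mu s = mu%:Z - k%:Z].
Proof.
rewrite /PDS_theta1 /PDS_theta2; set a := lam%:Z - mu%:Z => hs.
have dvd_plus : (2 %| a + s%:Z)%Z := dvdz2_add_sqrt hs.
have dvd_minus : (2 %| a - s%:Z)%Z.
  have -> : a - s%:Z = (a + s%:Z) - s%:Z * 2 by ring.
  by rewrite rpredB ?dvdz_mull.
move: (divzK dvd_plus) (divzK dvd_minus).
set t1 := ((a + s%:Z) %/ 2)%Z; set t2 := ((a - s%:Z) %/ 2)%Z => e1 e2.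
have e12 : (t1 * t2) * 4 = (mu%:Z - k%:Z) * 4.
  have -> : t1 * t2 * 4 = (t1 * 2) * (t2 * 2) by ring.
  by rewrite e1 e2 mulrC -subr_sqr hs /PDS_Delta -/a; ring.
split; [lia | lia | exact: mulIf e12].
Qed.

Lemma mxtrace_pid_mx (R : pzRingType) n r : (r <= n)%N -> \tr (pid_mx r : 'M[R]_n) = r%:R.
Proof.
move=> le_rn; rewrite /mxtrace (eq_bigr (fun i : 'I_n => ((i < r)%N)%:R)); last first.
  by move=> i _; rewrite mxE eqxx.
rewrite -natr_sum -(big_mkord predT (fun i => nat_of_bool (i < r)%N)).
rewrite (big_cat_nat (leq0n r) le_rn) /= [X in (_ + X)%N]big1_seq ?addn0; last first.
  by move=> i /andP[_]; rewrite mem_index_iota => /andP[ri _]; rewrite ltnNge ri.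
rewrite (eq_big_seq (fun=> 1%N)) ?sum_nat_const_nat ?subn0 ?muln1 //.
by move=> i; rewrite mem_index_iota => /andP[_ ->].
Qed.

Lemma mxtrace_idem (F : fieldType) n (E : 'M[F]_n) :
  E *m E = E -> \tr E = (\rank E)%:R.
Proof.
move=> EE; set L := col_ebase E; set P := pid_mx (\rank E) : 'M[F]_n.
set U := row_ebase E.
have defE : L *m P *m U = E by apply: mulmx_ebase.
have PP : P *m P = P by rewrite pid_mx_id ?rank_leq_col.
have PULP : P *m (U *m L) *m P = P.
  apply: (can_inj (mulKmx (col_ebase_unit E))).
  apply: (can_inj (mulmxK (row_ebase_unit E))).
  have -> : L *m (P *m (U *m L) *m P) *m U = (L *m P *m U) *m (L *m P *m U).
    by rewrite !mulmxA.
  by rewrite defE EE.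
suff -> : \tr E = \tr P by rewrite mxtrace_pid_mx ?rank_leq_col.
by rewrite -defE -mulmxA mxtrace_mulC -{1}PP -!mulmxA mxtrace_mulC PULP.
Qed.

Lemma mulmx_const1 (R : pzRingType) n :
  (const_mx 1 : 'M[R]_n) *m const_mx 1 = n%:R *: (const_mx 1 : 'M[R]_n).
Proof.
apply/matrixP => i j; rewrite !mxE (eq_bigr (fun=> 1)) => [|l _].
  by rewrite sumr_const card_ord mulr1.
by rewrite !mxE mulr1.
Qed.

Lemma mxtrace_const1 (R : pzRingType) n : \tr (const_mx 1 : 'M[R]_n) = n%:R.
Proof. by rewrite /mxtrace (eq_bigr (fun=> 1)) => [|i _]; rewrite ?mxE // sumr_const card_ord. Qed.

Section TwoEigenvalueMatrix.

Variables (F : numFieldType) (n : nat) (M J : 'M[F]_n) (k mu : F).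
Hypotheses (mulMJ : M *m J = k *: J) (mulJM : J *m M = k *: J).
Hypothesis mulJJ : J *m J = n%:R *: J.

(* [(M - b) / (a - b)] projects onto the [a]-eigenspace away from the image of [J]
   (where [M] acts as [k]); the [J]-term cancels its value there. *)
Definition eigen_proj (a b : F) : 'M[F]_n :=
  (a - b)^-1 *: (M - b *: 1%:M) + (mu / ((a - b) * (a - k))) *: J.

Lemma eigen_valency_relation a b :
  M *m M = (a + b) *: M - (a * b) *: 1%:M + mu *: J -> J != 0 ->
  (k - a) * (k - b) = mu * n%:R.
Proof.
move=> sqrM J_neq0; apply/eqP; rewrite -subr_eq0.
have : M *m (M *m J) = (M *m M) *m J by rewrite mulmxA.
rewrite sqrM mulMJ -scalemxAr mulMJ !mulmxDl mulNmx -!scalemxAl mulMJ mul1mx mulJJ.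
rewrite !scalerA -scaleNr -!scalerDl => /eqP; rewrite -subr_eq0 -scalerBl.
rewrite scalemx_eq0 (negbTE J_neq0) orbF => /eqP eq0.
by apply/eqP; rewrite -eq0; ring.
Qed.

Lemma eigen_proj_idem a b :
  M *m M = (a + b) *: M - (a * b) *: 1%:M + mu *: J ->
  (k - a) * (k - b) = mu * n%:R -> mu != 0 -> a != b -> a != k ->
  eigen_proj a b *m eigen_proj a b = eigen_proj a b.
Proof.
move=> sqrM kn mu_neq0 neq_ab neq_ak.
have n_eq : n%:R = (k - a) * (k - b) / mu by rewrite kn mulrC mulKf.
rewrite /eigen_proj !scalemx1 !(mulmxDl, mulmxDr, mulmxBl, mulmxBr, mul1mx,
  mulmx1, mulmxN, mulNmx, mul_mx_scalar, mul_scalar_mx, =^~ scalemxAl, =^~ scalemxAr).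
rewrite sqrM mulMJ mulJM mulJJ.
apply/matrixP => i j; rewrite !mxE n_eq; case: (i == j); rewrite ?mulr1n ?mulr0n.
all: by field; rewrite !subr_eq0 neq_ab neq_ak mu_neq0.
Qed.

Lemma eigen_multiplicities a b :
  M *m M = (a + b) *: M - (a * b) *: 1%:M + mu *: J ->
  \tr M = 0 -> \tr J = n%:R -> (0 < n)%N -> mu != 0 -> a != b ->
  exists r1 r2 : nat, k + a * r1%:R + b * r2%:R = 0.
Proof.
move=> sqrM trM trJ n_gt0 mu_neq0 neq_ab.
have n_neq0 : n%:R != 0 :> F by rewrite pnatr_eq0 -lt0n.
have J_neq0 : J != 0 by apply: contra_neq n_neq0 => J0; rewrite -trJ J0 mxtrace0.
have kn := eigen_valency_relation sqrM J_neq0.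
have /andP[neq_ka neq_kb] : (k != a) && (k != b).
  by rewrite -negb_or -!(subr_eq0 k) -mulf_eq0 kn mulf_neq0.
have sqrM' : M *m M = (b + a) *: M - (b * a) *: 1%:M + mu *: J.
  by rewrite [b + a]addrC [b * a]mulrC.
have kn' : (k - b) * (k - a) = mu * n%:R by rewrite mulrC.
exists (\rank (eigen_proj a b)), (\rank (eigen_proj b a)).
rewrite -!mxtrace_idem ?eigen_proj_idem // 1?eq_sym //.
rewrite /eigen_proj !(mxtraceD, mxtraceZ) !raddfN /= !mxtraceZ mxtrace1 trM trJ.
have n_eq : n%:R = (k - a) * (k - b) / mu by rewrite kn mulrC mulKf.
rewrite n_eq; field.
by rewrite mu_neq0 !subr_eq0 ![_ == k]eq_sym neq_ka neq_kb eq_sym neq_ab.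
Qed.

End TwoEigenvalueMatrix.

Section TranslateCounting.

Local Open Scope group_scope.

Variables (gT : finGroupType) (G : {group gT}) (D : {set gT}).
Hypothesis sDG : D \subset G.

Lemma card_mulV_mem g : g \in G -> #|[set x in G | g * x^-1 \in D]| = #|D|.
Proof.
move=> gG; have -> : [set x in G | g * x^-1 \in D] = [set d^-1 * g | d in D].
  apply/setP => x; rewrite inE; apply/andP/imsetP => [[xG gxD] | [d dD ->]].
    by exists (g * x^-1); rewrite // invMg invgK mulgKV.
  by rewrite groupM ?groupV ?(subsetP sDG d dD) // invMg invgK mulKVg.
by rewrite card_imset // => d1 d2 /mulIg/invg_inj.
Qed.

Lemma card_mulV_mem2 g h : g \in G ->
  #|[set x in G | (g * x^-1 \in D) && (h * x^-1 \in D)]| = nreps D (g * h^-1).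
Proof.
move=> gG; rewrite /nreps.
have -> : [set xy in setX D D | xy.1 * xy.2^-1 == g * h^-1] =
    [set (g * x^-1, h * x^-1) | x in [set x in G | (g * x^-1 \in D) && (h * x^-1 \in D)]].
  apply/setP => [[d1 d2]]; rewrite !inE /=; apply/andP/imsetP.
    move=> [/andP[d1D d2D] /eqP def_g].
    have def_hg : h * g^-1 = d2 * d1^-1.
      by rewrite -[LHS]invgK invMg invgK -def_g invMg invgK.
    exists (d1^-1 * g); rewrite ?inE !invMg !invgK mulKVg mulgA def_hg mulgKV //.
    by rewrite groupM ?groupV ?(subsetP sDG d1 d1D) ?d1D.
  move=> [x]; rewrite inE => /andP[xG /andP[gxD hxD]] [-> ->].
  by rewrite gxD hxD invMg invgK mulgA mulgKV.
by rewrite card_imset // => x1 x2 [/mulgI/invg_inj].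
Qed.

Lemma mem_mulV_sym : D^-1 = D -> forall x y, (x * y^-1 \in D) = (y * x^-1 \in D).
Proof. by move=> Dinv x y; rewrite -{1}Dinv inE invMg invgK. Qed.

End TranslateCounting.

Lemma nreps1 (gT : finGroupType) (D : {set gT}) : nreps D 1%g = #|D|.
Proof.
rewrite -(mulgV 1%g) -(card_mulV_mem2 (subsetT D)) ?inE //.
rewrite -(card_mulV_mem (subsetT D) (in_setT 1%g)).
by apply: eq_card => x; rewrite !inE andbb.
Qed.

Lemma sumr_indicator (R : pzRingType) (T : finType) (A : {set T}) (P : pred T) :
  \sum_(x in A) ((P x)%:R : R) = #|[set x in A | P x]|%:R.
Proof.
by rewrite -natr_sum -big_mkcondr -sum1_card; apply: congr1; apply: eq_bigl => x; rewrite inE.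
Qed.

Section DifferenceSetMatrix.

Variables (R : nzRingType) (gT : finGroupType) (G : {group gT}) (D : {set gT}).
Hypotheses (sDG : D \subset G) (Dinv : (D^-1)%g = D).

Let elt (i : 'I_#|G|) : gT := enum_val i.

Definition pds_mx : 'M[R]_#|G| := \matrix_(i, j) ((elt i * (elt j)^-1)%g \in D)%:R.

Lemma sum_elt (F : gT -> R) : \sum_(i < #|G|) F (elt i) = \sum_(x in G) F x.
Proof. by rewrite (big_enum_val F). Qed.

Local Notation J := (const_mx 1 : 'M[R]_#|G|).

Lemma pds_mx_mulJ : pds_mx *m J = #|D|%:R *: J.
Proof.
apply/matrixP => i j; rewrite !mxE.
under eq_bigr do rewrite !mxE mulr1.
rewrite (sum_elt (fun x => ((elt i * x^-1)%g \in D)%:R)) sumr_indicator.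
by rewrite card_mulV_mem ?mulr1 ?enum_valP.
Qed.

Lemma pds_mx_mulJl : J *m pds_mx = #|D|%:R *: J.
Proof.
apply/matrixP => i j; rewrite !mxE.
under eq_bigr do rewrite !mxE mul1r (mem_mulV_sym Dinv).
rewrite (sum_elt (fun x => ((elt j * x^-1)%g \in D)%:R)) sumr_indicator.
by rewrite card_mulV_mem ?mulr1 ?enum_valP.
Qed.

Lemma pds_mx_sqrE i j : (pds_mx *m pds_mx) i j = (nreps D (elt i * (elt j)^-1)%g)%:R.
Proof.
rewrite !mxE; under eq_bigr do rewrite !mxE [in X in _ * X](mem_mulV_sym Dinv) -natrM mulnb.
rewrite (sum_elt (fun x => (((elt i * x^-1)%g \in D) && ((elt j * x^-1)%g \in D))%:R)).
by rewrite sumr_indicator card_mulV_mem2 ?enum_valP.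
Qed.

Lemma pds_mx_sqr (lam mu : nat) : 1%g \notin D ->
  {in D, forall g, g != 1%g -> nreps D g = lam} ->
  {in G :\: D, forall g, g != 1%g -> nreps D g = mu} ->
  pds_mx *m pds_mx = (lam%:R - mu%:R) *: pds_mx + (#|D|%:R - mu%:R) *: 1%:M + mu%:R *: J.
Proof.
move=> D1 nreps_in nreps_out; apply/matrixP => i j; rewrite pds_mx_sqrE !mxE mulr1.
have [<-|neq_ij] := eqVneq i j.
  by rewrite mulgV nreps1 (negbTE D1) mulr0 add0r mulr1 subrK.
have g_neq1 : (elt i * (elt j)^-1)%g != 1%g.
  by rewrite -eq_mulgV1; apply: contra neq_ij => /eqP/enum_val_inj ->.
rewrite mulr0 addr0; have [gD|gND] := boolP (_ \in D).
  by rewrite nreps_in // mulr1 subrK.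
by rewrite nreps_out ?inE ?gND ?groupM ?groupV ?enum_valP // mulr0 add0r.
Qed.

Lemma mxtrace_pds_mx : 1%g \notin D -> \tr pds_mx = 0.
Proof. by move=> D1; rewrite /mxtrace big1 // => i _; rewrite mxE mulgV (negbTE D1). Qed.

End DifferenceSetMatrix.

Lemma regular_PDS_theta_relation (gT : finGroupType) (G : {group gT}) (D : {set gT})
    (v k lam mu s : nat) :
  is_regular_PDS G D v k lam mu -> (0 < mu)%N -> (mu < k)%N ->
  s%:Z ^+ 2 = PDS_Delta k lam mu ->
  exists r1 r2 : nat,
    k%:Z + PDS_theta1 lam mu s * r1%:Z + PDS_theta2 lam mu s * r2%:Z = 0.
Proof.
move=> [[sDG _ cardD nreps_in nreps_out] Dinv D1] mu_gt0 mu_lt_k hs.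
have [sum_th dif_th prod_th] := PDS_theta_vieta hs.
set th1 := PDS_theta1 lam mu s; set th2 := PDS_theta2 lam mu s.
have s_gt0 : (0 < s)%N.
  rewrite lt0n; apply: contra_eq_neq hs => ->; rewrite /PDS_Delta.
  by have := sqr_ge0 (lam%:Z - mu%:Z); lia.
have sqrM : pds_mx rat G D *m pds_mx rat G D =
    (th1%:~R + th2%:~R) *: pds_mx rat G D - (th1%:~R * th2%:~R) *: 1%:M
    + mu%:R *: const_mx 1.
  rewrite (pds_mx_sqr _ sDG Dinv D1 nreps_in nreps_out) -intrD -intrM sum_th prod_th.
  by rewrite -scaleNr -intrN opprB cardD !intrB -!pmulrn.
have [||r1 [r2 rel]] := eigen_multiplicities (pds_mx_mulJ rat sDG)
  (pds_mx_mulJl rat sDG Dinv) (mulmx_const1 _ _) sqrM (mxtrace_pds_mx rat G D1)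
  (mxtrace_const1 _ _) (cardG_gt0 G).
- by rewrite pnatr_eq0 -lt0n.
- by rewrite -subr_eq0 -intrB dif_th intr_eq0 -lt0n.
exists r1, r2; apply/eqP; rewrite -(intr_eq0 rat) !intrD !intrM -!pmulrn -cardD.
exact/eqP.
Qed.

Theorem mainTheorem17 (gT : finGroupType) (G : {group gT}) (D : {set gT})
  (v k lam mu s : nat) :
  is_regular_PDS G D v k lam mu ->
  (0 < mu)%N -> (mu < k)%N ->
  (s%:Z) ^+ 2 = PDS_Delta k lam mu ->
  (forall (p l : nat), prime p ->
     (((p ^ l)%N)%:Z %| PDS_theta1 lam mu s)%Z ->
     (((p ^ l)%N)%:Z %| PDS_theta2 lam mu s)%Z ->
     (p ^ l %| k)%N)
  /\ (gcdz (PDS_theta1 lam mu s) (PDS_theta2 lam mu s) %| k%:Z)%Z.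
Proof.
move=> hPDS mu_gt0 mu_lt_k hs.
have [r1 [r2 rel]] := regular_PDS_theta_relation hPDS mu_gt0 mu_lt_k hs.
have dvd_k d : (d %| PDS_theta1 lam mu s)%Z -> (d %| PDS_theta2 lam mu s)%Z ->
    (d %| k%:Z)%Z.
  have -> : k%:Z = - (PDS_theta1 lam mu s * r1 + PDS_theta2 lam mu s * r2).
    by apply/eqP; rewrite -addr_eq0 addrA rel.
  by move=> dvd1 dvd2; rewrite rpredN rpredD ?dvdz_mulr.
split=> [p l _ dvd1 dvd2 | ]; first by have := dvd_k _ dvd1 dvd2; rewrite dvdzE.
exact: dvd_k (dvdz_gcdl _ _) (dvdz_gcdr _ _).
Qed.
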